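(* Let $\pi=(\pi_1,\ldots,\pi_n)$ be a permutation of $\{1,\ldots,n\}$ that is convex, i.e. $\pi_2-\pi_1\le\pi_3-\pi_2\le\cdots\le\pi_n-\pi_{n-1}$, and let $P$ be its permutation matrix. Then for each $k\le n$, the set $I_k(P)$ of rows of $P$ containing a $1$ in one of the first $k$ columns (equivalently $I_k(P)=\{i:\pi_i\le k\}$) is an interval of length $k$, i.e. a set of $k$ consecutive integers.
   Context: The permutation matrix $P$ of $\pi$ is the $n\times n$ $(0,1)$-matrix with $1$ in positions $(i,\pi_i)$. An interval in $\{1,\ldots,n\}$ is a set $\{k,k+1,\ldots,l\}$ with $1\le k\le l\le n$; its length is $l-k+1$. *)

From mathcomp Require Import all_boot all_order all_algebra all_fingroup.
Set Implicit Arguments. Unset Strict Implicit. Unset Printing Implicit Defensive.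
Import GRing.Theory Num.Theory.

(* Conventions: positions/values are 0-based, i.e. {1..n} is modelled by 'I_n
   (position p corresponds to p+1). A permutation is s : 'S_n. *)

Definition convex_perm (n : nat) (s : 'S_n) : Prop :=
  forall i j l : 'I_n, val j = (val i).+1 -> val l = (val j).+1 ->
    ((s j)%:Z - (s i)%:Z <= (s l)%:Z - (s j)%:Z)%R.

Definition permMatrix (n : nat) (s : 'S_n) : 'M[int]_n :=
  \matrix_(i < n, j < n) ((s i == j)%:R)%R.

Definition Ik (n : nat) (P : 'M[int]_n) (k : nat) : {set 'I_n} :=
  [set i | [exists j : 'I_n, (val j < k) && (P i j == 1%R)]].

Definition is_interval_of_length (n : nat) (S : {set 'I_n}) (k : nat) : Prop :=
  exists a : nat, a + k <= n /\ S = [set i : 'I_n | a <= val i < a + k].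

(* A convex sequence u satisfies u_j <= max (u_i, u_l) for i <= j <= l: if the
   increment entering position j is nonpositive then so are all earlier ones,
   and otherwise all later ones are nonnegative.  Hence the rows
   {i : pi_i < k} form an order-convex set of k positions, i.e. k consecutive
   ones. *)

From mathcomp Require Import all_boot all_order all_algebra all_fingroup zify.
Import Order.TTheory GRing.Theory Num.Theory.
Set Implicit Arguments.
Unset Strict Implicit.
Unset Printing Implicit Defensive.

Section ConvexSequence.
Variables (R : realDomainType) (n : nat) (u : nat -> R).

Local Open Scope ring_scope.

Definition convex_seq : Prop :=
  forall m, (m.+2 < n)%N -> u m.+1 - u m <= u m.+2 - u m.+1.

Hypothesis u_convex : convex_seq.

Lemma convex_seq_incr_homo m p : (m <= p)%N -> (p.+1 < n)%N ->
  u m.+1 - u m <= u p.+1 - u p.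
Proof.
elim: p => [|p IH]; first by rewrite leqn0 => /eqP ->.
rewrite leq_eqVlt => /predU1P[-> // | lt_mp] lt_p2n.
by apply: le_trans (u_convex lt_p2n); apply: IH; lia.
Qed.

Lemma convex_seq_le_max i j l : (i <= j <= l)%N -> (l < n)%N ->
  u j <= Num.max (u i) (u l).
Proof.
move=> /andP[le_ij le_jl] lt_ln; rewrite le_max.
have [incr_le0 | incr_ge0] := lerP (u j.-1.+1 - u j.-1) 0.
- apply/orP; left; rewrite -subr_le0 -telescope_sumr //.
  rewrite big_nat sumr_le0 // => m /andP[_ lt_mj].
  apply: le_trans incr_le0; apply: convex_seq_incr_homo; lia.
- apply/orP; right; rewrite -subr_ge0 -telescope_sumr //.
  rewrite big_nat sumr_ge0 // => m /andP[le_jm lt_ml].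
  apply: le_trans (ltW incr_ge0) _; apply: convex_seq_incr_homo; lia.
Qed.

End ConvexSequence.

Lemma card_ord_range n a c : (c <= n)%N ->
  #|[set i : 'I_n | a <= i < c]| = c - a.
Proof.
move=> le_cn; rewrite -sum1_card.
under eq_bigl do rewrite inE andbC.
rewrite -(@big_geq_mkord _ _ _ a n (fun i => i < c) (fun=> 1)).
by rewrite -(big_nat_widen _ _ _ predT) // sum_nat_const_nat muln1.
Qed.

Definition order_convex n (S : {set 'I_n}) : Prop :=
  forall a x b : 'I_n, a \in S -> b \in S -> a <= x <= b -> x \in S.

Lemma order_convex_is_interval n (S : {set 'I_n}) :
  order_convex S -> is_interval_of_length S #|S|.
Proof.
move=> S_convex; have [-> | [i0 i0S]] := set_0Vmem S.
  by exists 0; rewrite cards0; split=> //; apply/setP => i; rewrite !inE ltn0 andbF.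
have [a aS a_min] := arg_minnP val i0S.
have [b bS b_max] := arg_maxnP val i0S.
have S_range : S = [set i : 'I_n | a <= i < b.+1].
  apply/setP => x; rewrite inE ltnS; apply/idP/idP => [xS | x_ab].
    by rewrite (a_min _ xS) (b_max _ xS : x <= b).
  exact: S_convex aS bS x_ab.
have le_ab : (a <= b)%N by rewrite a_min.
have card_S : #|S| = b.+1 - a by rewrite {1}S_range card_ord_range.
by exists a; rewrite card_S subnKC ?(leqW le_ab).
Qed.

Section ConvexPermutation.
Variables (n : nat) (s : 'S_n).

(* The value 0 beyond [n] is junk: convexity only constrains indices below [n]. *)
Definition perm_seq (m : nat) : int :=
  (if insub m is Some i then (s i)%:Z else 0)%R.

Lemma perm_seqE (i : 'I_n) : perm_seq i = (s i)%:Z%R.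
Proof. by rewrite /perm_seq valK. Qed.

Lemma convex_perm_seq : convex_perm s -> convex_seq n perm_seq.
Proof.
move=> s_convex m lt_m2n.
have lt_mn : (m < n)%N by lia.
have lt_m1n : (m.+1 < n)%N by lia.
have := s_convex (Ordinal lt_mn) (Ordinal lt_m1n) (Ordinal lt_m2n) erefl erefl.
by rewrite -!(perm_seqE (Ordinal _)).
Qed.

Lemma Ik_permMatrix k : Ik (permMatrix s) k = [set i | s i < k].
Proof.
apply/setP => i; rewrite !inE; apply/existsP/idP => [[j] | lt_sik].
  by rewrite mxE; case: (s i =P j) => [-> /andP[] | _ /andP[]].
by exists (s i); rewrite lt_sik mxE eqxx.
Qed.

Lemma card_perm_sublevel k : k <= n -> #|[set i | s i < k]| = k.
Proof.
move=> le_kn; have -> : [set i | s i < k] = s @^-1: [set j : 'I_n | 0 <= j < k].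
  by apply/setP => i; rewrite !inE.
by rewrite card_preimset ?card_ord_range ?subn0 //; apply: perm_inj.
Qed.

Lemma convex_perm_sublevel_order_convex k : convex_perm s ->
  order_convex [set i | s i < k].
Proof.
move=> s_convex a x b; rewrite !inE => lt_sak lt_sbk x_ab.
have := convex_seq_le_max (convex_perm_seq s_convex) x_ab (ltn_ord b).
rewrite !perm_seqE le_max !lez_nat.
by case/orP => /leq_ltn_trans ->.
Qed.

End ConvexPermutation.

Theorem lemma4p2 (n : nat) (s : 'S_n) (k : nat) :
  convex_perm s -> 1 <= k <= n ->
  is_interval_of_length (Ik (permMatrix s) k) k.
Proof.
move=> s_convex /andP[_ le_kn].
rewrite Ik_permMatrix -{2}(card_perm_sublevel s le_kn).
exact/order_convex_is_interval/convex_perm_sublevel_order_convex.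
Qed.
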